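(* Let $N$ be a positive integer divisible by $4$, let $h>0$ and $\sigma\ge 0$, and set $N_1=N$, $N_2=N/2$, $N_3=N/4$. Let $u_1,\dots,u_N$ be deterministic real numbers and let $\xi_1,\dots,\xi_N$ be independent real random variables with $\mathbb{E}(\xi_i)=0$ and $\mathbb{E}(\xi_i^2)=\frac{2\sigma^2}{Nh}$ for all $i$. Put $u_0(x_i)=u_i+\xi_i$ for $i=1,\dots,N$. Define $v^0_i=u_0(x_i)$ for $i=1,\dots,N_1$ and recursively $v^j_i=\frac{v^{j-1}_{2i}+v^{j-1}_{2i-1}}{2}$ for $i=1,\dots,N_{j+1}$, $j=1,2$. Define $$V_{j+1}=\sum_{i=1}^{N_{j+1}-1}|v^j_{i+1}-v^j_i|^2\cdot\frac{1}{2^j h},\qquad j=0,1,2,$$ and $$\hat\sigma^2=h^2\,\frac{\left(\frac{119}{16}-\frac{27}{4N}\right)V_1+\left(\frac{9}{4N}-\frac{49}{16}\right)V_2+\left(\frac{9}{2N}-\frac{35}{8}\right)V_3}{\frac{3577}{128}+\frac{189}{8N^2}-\frac{819}{16N}}.$$ Similarly define $u^{(0)}_i=u_i$ for $i=1,\dots,N_1$, $u^{(j)}_i=\frac{u^{(j-1)}_{2i-1}+u^{(j-1)}_{2i}}{2}$ for $i=1,\dots,N_{j+1}$, $j=1,2$, and $$V^c_{j+1}=\sum_{i=1}^{N_{j+1}-1}\frac{|u^{(j)}_{i+1}-u^{(j)}_i|^2}{2^{j}h},\qquad j=0,1,2.$$ Then $\hat\sigma^2$ is an estimate of $\sigma^2$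 whose bias is $$\mathbb{E}(\hat\sigma^2)-\sigma^2=h^2\,\frac{\left(\frac{49}{16}-\frac{9}{4N}\right)(V^c_1-V^c_2)+\left(\frac{35}{8}-\frac{9}{2N}\right)(V^c_1-V^c_3)}{\frac{3577}{128}+\frac{189}{8N^2}-\frac{819}{16N}}.$$
   Context: Here $u_0(x_i)$ models an observed (noisy) traffic velocity in the $i$-th time slice of length $h$, $u_i$ the clean velocity and $\xi_i$ the noise; $\sigma$ is the noise-strength parameter. The quantities $V_1,V_2,V_3$ are discrete squared variations of the observed data at three resolutions obtained by successive pairwise averaging, and $V^c_1,V^c_2,V^c_3$ are the analogous quantities for the clean data. *)

From HB Require Import structures.
From mathcomp Require Import all_boot all_order all_algebra.
From mathcomp Require Import all_classical all_reals all_analysis.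
Set Implicit Arguments. Unset Strict Implicit. Unset Printing Implicit Defensive.
Import Order.TTheory GRing.Theory Num.Theory.
Local Open Scope classical_set_scope.
Local Open Scope ring_scope.

(* Sequences are 1-indexed functions nat -> R (index 0 and indices > N unused). *)

Definition avg2 (R : realType) (v : nat -> R) : nat -> R :=
  fun i => (v (2 * i)%N + v (2 * i).-1) / 2.

Definition level (R : realType) (v : nat -> R) (j : nat) : nat -> R :=
  iter j (@avg2 R) v.

Definition Vvar (R : realType) (h : R) (N : nat) (v : nat -> R) (j : nat) : R :=
  \sum_(1 <= i < N %/ 2 ^ j)
     `|level v j i.+1 - level v j i| ^+ 2 / (2 ^+ j * h).

Definition denom (R : realType) (N : nat) : R :=
  3577 / 128 + 189 / (8 * N%:R ^+ 2) - 819 / (16 * N%:R).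

Definition sigma_hat2 (R : realType) (h : R) (N : nat) (v : nat -> R) : R :=
  h ^+ 2 *
  ((119 / 16 - 27 / (4 * N%:R)) * Vvar h N v 0
   + (9 / (4 * N%:R) - 49 / 16) * Vvar h N v 1
   + (9 / (2 * N%:R) - 35 / 8) * Vvar h N v 2) / denom R N.

Definition bias (R : realType) (h : R) (N : nat) (u : nat -> R) : R :=
  h ^+ 2 *
  ((49 / 16 - 9 / (4 * N%:R)) * (Vvar h N u 0 - Vvar h N u 1)
   + (35 / 8 - 9 / (2 * N%:R)) * (Vvar h N u 0 - Vvar h N u 2)) / denom R N.

Definition mutually_independent (d : measure_display) (T : measurableType d)
  (R : realType) (P : probability T R) (N : nat) (X : nat -> T -> R) : Prop :=
  forall (J : seq nat) (B : nat -> set R),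
    uniq J -> all (fun i => (1 <= i <= N)%N) J ->
    (forall i, measurable (B i)) ->
    P [set w | forall i, i \in J -> B i (X i w)] =
    (\prod_(i <- J) P (X i @^-1` B i))%E.

From HB Require Import structures.
From mathcomp Require Import all_boot all_order all_algebra.
From mathcomp Require Import all_classical all_reals all_analysis.
From mathcomp Require Import measurable_realfun ring lra zify.
Import Order.TTheory GRing.Theory Num.Theory.
Local Open Scope classical_set_scope.
Local Open Scope ring_scope.

(* Averaging is linear, so every level of the observed data is the clean level plus the
   averaged noise, and an increment at level [j] is the clean increment plus a combination
   of [2 ^ (j + 1)] noise terms with weights [-+ 2 ^ -j].  Centred, pairwise independent
   noise with second moment [s2] kills the cross term and contributes [2 s2 / 2 ^ j] on
   average, so E V_(j+1) = V^c_(j+1) + (N / 2 ^ j - 1) 2 s2 / (4 ^ j h).  The weights of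
   the estimator sum to zero, which turns its clean part into the bias, and for
   s2 = 2 sigma^2 / (N h) they are normalised so that the noise parts add up to sigma^2. *)

Set Implicit Arguments. Unset Strict Implicit. Unset Printing Implicit Defensive.

Section independent_product.
Context (R : realType) (d : measure_display) (T : measurableType d)
  (P : probability T R).
Local Open Scope ereal_scope.

Definition independent2 (X Y : T -> R) : Prop :=
  forall A B, measurable A -> measurable B ->
  P (X @^-1` A `&` Y @^-1` B) = P (X @^-1` A) * P (Y @^-1` B).

Variables X Y : {RV P >-> R}.

Definition RV_pair (w : T) : (R * R)%type := (X w, Y w).

Lemma measurable_RV_pair : measurable_fun [set: T] RV_pair.
Proof. exact: measurable_fun_pair. Qed.

HB.instance Definition _ :=
  isMeasurableFun.Build _ _ T (R * R)%type RV_pair measurable_RV_pair.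

Lemma distribution_RV_pair :
  independent2 X Y -> forall A, measurable A ->
  distribution P RV_pair A = (distribution P X \x distribution P Y) A.
Proof. by move=> XY A mA; symmetry; apply: product_measure_unique. Qed.

Lemma expectationM_independent2 : independent2 X Y ->
  (X : T -> R) \in Lfun P 1 -> (Y : T -> R) \in Lfun P 1 ->
  (X \* Y)%R \in Lfun P 1 ->
  'E_P[X \* Y] = 'E_P[X] * 'E_P[Y].
Proof.
move=> XY /Lfun1_integrable iX /Lfun1_integrable iY /Lfun1_integrable iXY.
pose f : (R * R)%type -> \bar R := fun z => (z.1 * z.2)%:E.
have mf : measurable_fun [set: (R * R)%type] f.
  by apply/measurable_EFinP; apply: measurable_funM.
have eqXY A : measurable A -> A `<=` setT ->
    distribution P RV_pair A = (distribution P X \x distribution P Y) A.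
  by move=> mA _; exact: distribution_RV_pair.
have ipair : (distribution P RV_pair).-integrable setT f.
  exact: integrable_pushforward.
have iprod : (distribution P X \x distribution P Y).-integrable setT f.
  apply/integrableP; split => //.
  by rewrite -(eq_measure_integral _ eqXY); case/integrableP: ipair.
have [y EY] : exists y, 'E_P[Y] = y%:E.
  by exists (fine 'E_P[Y]); rewrite fineK// expectation_fin_num// Lfun1_integrable.
rewrite EY !expectation_def.
transitivity (\int[distribution P RV_pair]_z f z).
  by rewrite integral_pushforward.
rewrite (eq_measure_integral _ eqXY) -integral12_prod_meas1 //.
transitivity (\int[distribution P X]_x (x%:E * y%:E)).
  apply: eq_integral => x _; rewrite /fubini_F /f /=.
  under eq_integral do rewrite EFinM.
  rewrite integralZl//; last exact: integrable_pushforward.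
  by rewrite integral_distribution // -expectation_def EY.
rewrite integralZr//; last exact: integrable_pushforward.
by rewrite integral_distribution.
Qed.

End independent_product.

Section averaging.
Variable R : realType.
Implicit Types v w : nat -> R.

Lemma levelS v j : level v j.+1 = avg2 (level v j).
Proof. by rewrite /level iterS. Qed.

Lemma levelD v w j i :
  level (fun k => v k + w k) j i = level v j i + level w j i.
Proof. by elim: j i => [|j IH] i //; rewrite !levelS /avg2 !IH; lra. Qed.

Lemma level_block_mean v j i :
  level v j i.+1 = (2 ^+ j)^-1 * \sum_(2 ^ j * i <= k < 2 ^ j * i.+1) v k.+1.
Proof.
elim: j i => [|j IH] i; first by rewrite expr0 invr1 mul1r !mul1n big_nat1.
have -> : (2 ^ j.+1 * i = 2 ^ j * (2 * i))%N by rewrite expnS mulnCA mulnA.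
have -> : (2 ^ j.+1 * i.+1 = 2 ^ j * (2 * i).+2)%N.
  by rewrite expnS -mulnA mulnCA; congr (_ * _)%N; lia.
rewrite levelS /avg2 (_ : (2 * i.+1)%N = (2 * i).+2); last by lia.
rewrite !IH [in RHS](@big_cat_nat _ _ _ (2 ^ j * (2 * i).+1)) ?leq_pmul2l ?expn_gt0 //=.
by rewrite exprS invfM; ring.
Qed.

Definition incr_weight j i k : R :=
  if (k < 2 ^ j * i.+1)%N then - (2 ^+ j)^-1 else (2 ^+ j)^-1.

Lemma incr_weight_sqr j i k : incr_weight j i k ^+ 2 = (2 ^+ j)^-2.
Proof. by rewrite /incr_weight; case: ifP; rewrite ?sqrrN exprVn. Qed.

Lemma level_incr v j i :
  level v j i.+2 - level v j i.+1 =
  \sum_(2 ^ j * i <= k < 2 ^ j * i.+2) incr_weight j i k * v k.+1.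
Proof.
rewrite !level_block_mean [in RHS](@big_cat_nat _ _ _ (2 ^ j * i.+1)); last 2 first.
- by rewrite leq_pmul2l ?expn_gt0.
- by rewrite leq_pmul2l ?expn_gt0.
rewrite !mulr_sumr -sumrN addrC; congr (_ + _); apply: eq_big_nat => k /andP[lo hi].
  by rewrite /incr_weight hi mulNr.
by rewrite /incr_weight ltnNge lo.
Qed.

End averaging.

Lemma normr_le_1_sqr (R : realDomainType) (x : R) : `|x| <= 1 + x ^+ 2.
Proof.
rewrite -real_normK ?num_real //; have := normr_ge0 x; set y := `|x|; nra.
Qed.

Lemma normrM_le_sqrD (R : realDomainType) (x y : R) : `|x * y| <= x ^+ 2 + y ^+ 2.
Proof.
rewrite normrM -(real_normK (num_real x)) -(real_normK (num_real y)).
have := normr_ge0 x; have := normr_ge0 y; set a := `|x|; set b := `|y|; nra.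
Qed.

Section has_mean.
Context (R : realType) (d : measure_display) (T : measurableType d)
  (P : probability T R).
Implicit Types (X Y : T -> R) (r s : R).

Definition has_mean X r := X \in Lfun P 1 /\ ('E_P[X] = r%:E)%E.

Lemma has_mean_cst r : has_mean (fun=> r) r.
Proof. by split; [exact: Lfun_cst | exact: expectation_cst]. Qed.

Lemma has_meanD X Y r s : has_mean X r -> has_mean Y s ->
  has_mean (fun w => X w + Y w) (r + s).
Proof.
move=> [LX EX] [LY EY]; split; first exact: rpredD.
by rewrite (expectationD LX LY) EX EY.
Qed.

Lemma has_meanZ k X r : has_mean X r -> has_mean (fun w => k * X w) (k * r).
Proof.
move=> [LX EX]; split; first exact: (rpredZ k LX).
rewrite (_ : (fun w => k * X w) = k \o* X); last by apply/funext => w /=; rewrite mulrC.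
by rewrite (expectationZl k LX) EX EFinM.
Qed.

Lemma eq_has_mean X Y r : X =1 Y -> has_mean X r -> has_mean Y r.
Proof. by move/funext->. Qed.

Lemma has_mean_sum (I : eqType) (s : seq I) (F : I -> T -> R) (m : I -> R) :
  (forall i, i \in s -> has_mean (F i) (m i)) ->
  has_mean (fun w => \sum_(i <- s) F i w) (\sum_(i <- s) m i).
Proof.
elim: s => [|i s IH] Fm.
  by apply: (@eq_has_mean (fun=> 0)) => [w|]; rewrite ?big_nil //; exact: has_mean_cst.
apply: (@eq_has_mean (fun w => F i w + \sum_(j <- s) F j w)) => [w|].
  by rewrite big_cons.
rewrite big_cons; apply: has_meanD; first by apply: Fm; rewrite mem_head.
by apply: IH => j js; apply: Fm; rewrite inE js orbT.
Qed.

Lemma Lfun1_nonneg X r : measurable_fun setT X -> (forall w, 0 <= X w) ->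
  ('E_P[X] = r%:E)%E -> X \in Lfun P 1.
Proof.
move=> mX X_ge0 EX; apply/Lfun1_integrable/integrableP; split.
  exact/measurable_EFinP.
under eq_integral do rewrite /= ger0_norm //.
by move: EX; rewrite unlock => ->; exact: ltry.
Qed.

Lemma Lfun1_dominated X Y : measurable_fun setT X -> Y \in Lfun P 1 ->
  (forall w, `|X w| <= Y w) -> X \in Lfun P 1.
Proof.
move=> mX /Lfun1_integrable LY XY; apply/Lfun1_integrable.
apply: le_integrable LY => //; first exact/measurable_EFinP.
by move=> w _ /=; rewrite lee_fin (le_trans (XY w)) // ler_norm.
Qed.

Lemma Lfun1_of_sqr X : measurable_fun setT X ->
  (fun w => X w ^+ 2) \in Lfun P 1 -> X \in Lfun P 1.
Proof.
move=> mX LX2; apply: (Lfun1_dominated mX (Y := fun w => 1 + X w ^+ 2)).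
  by apply: rpredD => //; exact: Lfun_cst.
by move=> w; exact: normr_le_1_sqr.
Qed.

Lemma Lfun1M_of_sqr X Y : measurable_fun setT X -> measurable_fun setT Y ->
  (fun w => X w ^+ 2) \in Lfun P 1 -> (fun w => Y w ^+ 2) \in Lfun P 1 ->
  (X \* Y)%R \in Lfun P 1.
Proof.
move=> mX mY LX2 LY2.
apply: (Lfun1_dominated _ (Y := fun w => X w ^+ 2 + Y w ^+ 2)).
- exact: measurable_funM.
- exact: rpredD.
- by move=> w; exact: normrM_le_sqrD.
Qed.

End has_mean.

Lemma mutually_independent2 (R : realType) (d : measure_display)
    (T : measurableType d) (P : probability T R) (N : nat) (X : nat -> T -> R) i k :
  mutually_independent P N X -> (1 <= i <= N)%N -> (1 <= k <= N)%N -> i != k ->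
  independent2 P (X i) (X k).
Proof.
move=> indep iN kN /negbTE ik A B mA mB.
have ki : (k == i) = false by rewrite eq_sym.
have := indep [:: i; k] (fun m => if m == i then A else B).
rewrite /= inE ik iN kN !big_cons big_nil eqxx ki mule1 => <- //; last first.
  by move=> m; case: ifP.
congr (P _); apply/seteqP; split => w /=.
  by move=> [Aw Bw] m; rewrite !inE => /orP[] /eqP ->; rewrite ?eqxx ?ki.
move=> ABw; split; first by have := ABw i; rewrite eqxx; apply; rewrite mem_head.
by have := ABw k; rewrite ki; apply; rewrite !inE eqxx orbT.
Qed.

Section independent_noise.
Context (R : realType) (d : measure_display) (T : measurableType d)
  (P : probability T R) (N : nat) (xi : nat -> {RV P >-> R}) (s2 : R).
Hypothesis xi_indep : mutually_independent P N (fun i => (xi i : T -> R)).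
Hypothesis xi_mean0 : forall i, (1 <= i <= N)%N -> ('E_P[xi i] = 0)%E.
Hypothesis xi_sqr :
  forall i, (1 <= i <= N)%N -> ('E_P[fun w => (xi i w ^+ 2)%R] = s2%:E)%E.

Let sqr_Lfun1 i : (1 <= i <= N)%N -> (fun w => xi i w ^+ 2) \in Lfun P 1.
Proof.
move=> iN; apply: Lfun1_nonneg (xi_sqr iN) => [|w]; last exact: sqr_ge0.
exact: measurable_funX.
Qed.

Let xi_Lfun1 i : (1 <= i <= N)%N -> (xi i : T -> R) \in Lfun P 1.
Proof. by move=> iN; apply: Lfun1_of_sqr => //; exact: sqr_Lfun1. Qed.

Lemma has_mean_noise i : (1 <= i <= N)%N -> has_mean P (xi i) 0.
Proof. by move=> iN; split; [exact: xi_Lfun1 | exact: xi_mean0]. Qed.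

Lemma has_mean_noiseM i k : (1 <= i <= N)%N -> (1 <= k <= N)%N ->
  has_mean P (fun w => xi i w * xi k w) (if i == k then s2 else 0).
Proof.
move=> iN kN; split; first exact: Lfun1M_of_sqr (sqr_Lfun1 iN) (sqr_Lfun1 kN).
case: eqVneq => [<-|ik].
  by rewrite -(xi_sqr iN); congr ('E_P[_])%E; apply/funext => w; rewrite expr2.
rewrite (expectationM_independent2 (mutually_independent2 xi_indep iN kN ik)).
- by rewrite (xi_mean0 kN) mule0.
- exact: xi_Lfun1.
- exact: xi_Lfun1.
- exact: Lfun1M_of_sqr (sqr_Lfun1 iN) (sqr_Lfun1 kN).
Qed.

End independent_noise.

(* [N %/ 2 ^ j - 1] is the number of increments summed in [Vvar h N _ j]. *)
Definition Vvar_noise (R : realType) (h : R) (N : nat) (s2 : R) (j : nat) : R :=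
  (N %/ 2 ^ j - 1)%:R * (2 * s2) / (4 ^+ j * h).

Section white_noise.
Context (R : realType) (d : measure_display) (T : measurableType d)
  (P : probability T R) (N : nat) (xi : nat -> T -> R) (s2 : R).
Hypothesis xi_centered : forall i, (1 <= i <= N)%N -> has_mean P (xi i) 0.
Hypothesis xi_uncorrelated : forall i k, (1 <= i <= N)%N -> (1 <= k <= N)%N ->
  has_mean P (fun w => xi i w * xi k w) (if i == k then s2 else 0).

Lemma has_mean_noise_comb a b (c : nat -> R) : (b <= N)%N ->
  has_mean P (fun w => \sum_(a <= k < b) c k * xi k.+1 w) 0.
Proof.
move=> bN; rewrite [X in has_mean _ _ X](_ : _ = \sum_(a <= k < b) c k * 0).
  by apply: has_mean_sum => k; rewrite mem_index_iota => /andP[_ kb];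
    apply/has_meanZ/xi_centered; lia.
by rewrite big1 // => k _; rewrite mulr0.
Qed.

Lemma has_mean_noise_comb_sqr a b (c : nat -> R) : (b <= N)%N ->
  has_mean P (fun w => (\sum_(a <= k < b) c k * xi k.+1 w) ^+ 2)
    (s2 * \sum_(a <= k < b) c k ^+ 2).
Proof.
move=> bN.
apply: (@eq_has_mean _ _ _ _ (fun w => \sum_(a <= k < b) \sum_(a <= l < b)
    c k * c l * (xi k.+1 w * xi l.+1 w))) => [w|].
  rewrite expr2 mulr_suml; apply: eq_bigr => k _.
  by rewrite mulr_sumr; apply: eq_bigr => l _; ring.
have -> : s2 * \sum_(a <= k < b) c k ^+ 2 = \sum_(a <= k < b) \sum_(a <= l < b)
    c k * c l * (if k.+1 == l.+1 then s2 else 0).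
  rewrite mulr_sumr; apply: eq_big_seq => k; rewrite mem_index_iota => kab.
  rewrite (bigD1_seq k) ?mem_index_iota ?iota_uniq //= eqxx big1 ?addr0.
    by rewrite mulrC expr2.
  by move=> l /negbTE lk; rewrite eqSS eq_sym lk mulr0.
apply: has_mean_sum => k; rewrite mem_index_iota => /andP[_ kb].
apply: has_mean_sum => l; rewrite mem_index_iota => /andP[_ lb].
by apply/has_meanZ/xi_uncorrelated; lia.
Qed.

Lemma has_mean_incr_sqr (u : nat -> R) j i : (2 ^ j * i.+2 <= N)%N ->
  has_mean P
    (fun w => `|level (fun k => u k + xi k w) j i.+2
               - level (fun k => u k + xi k w) j i.+1| ^+ 2)
    (`|level u j i.+2 - level u j i.+1| ^+ 2 + 2 * s2 / 2 ^+ j).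
Proof.
move=> blockN; set D := level u j i.+2 - level u j i.+1.
set Z := fun w => \sum_(2 ^ j * i <= k < 2 ^ j * i.+2) incr_weight R j i k * xi k.+1 w.
apply: (@eq_has_mean _ _ _ _ (fun w => D ^+ 2 + 2 * D * Z w + Z w ^+ 2)) => [w|].
  by rewrite !levelD real_normK ?num_real // /Z -(level_incr (fun k => xi k w)) /D; ring.
have -> : 2 * s2 / 2 ^+ j
    = s2 * \sum_(2 ^ j * i <= k < 2 ^ j * i.+2) incr_weight R j i k ^+ 2.
  under eq_bigr do rewrite incr_weight_sqr.
  rewrite sumr_const_nat -mulnBr (_ : i.+2 - i = 2)%N; last by lia.
  rewrite -[_ *+ (_ * _)%N]mulr_natr natrM natrX; field.
  by rewrite expf_neq0 // pnatr_eq0.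
have Z0 : has_mean P Z 0 by exact: has_mean_noise_comb.
have Z2 := has_mean_noise_comb_sqr (2 ^ j * i) (incr_weight R j i) blockN.
have := has_meanD (has_meanD (has_mean_cst P (D ^+ 2)) (has_meanZ (2 * D) Z0)) Z2.
by rewrite mulr0 addr0 real_normK ?num_real.
Qed.

Lemma has_mean_Vvar (h : R) (u : nat -> R) j : h != 0 ->
  has_mean P (fun w => Vvar h N (fun i => u i + xi i w) j)
    (Vvar h N u j + Vvar_noise h N s2 j).
Proof.
move=> h0; rewrite /Vvar /Vvar_noise.
have -> : (N %/ 2 ^ j - 1)%:R * (2 * s2) / (4 ^+ j * h)
    = \sum_(1 <= i < N %/ 2 ^ j) (2 * s2 / 2 ^+ j) / (2 ^+ j * h).
  rewrite sumr_const_nat -[_ *+ (_ - _)%N]mulr_natl.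
  rewrite (_ : 4 ^+ j = 2 ^+ j * 2 ^+ j :> R); last by rewrite -exprMn -natrM.
  field.
  by rewrite h0 expf_neq0 // pnatr_eq0.
rewrite -big_split /=; apply: has_mean_sum => i.
rewrite mem_index_iota; case: i => [//|i] /andP[_ iN].
rewrite -mulrDl [X in has_mean _ _ X]mulrC.
apply: (eq_has_mean (fun w => mulrC _ _)).
apply: has_meanZ; apply: has_mean_incr_sqr; apply: leq_trans (leq_divM N (2 ^ j)).
by rewrite mulnC leq_mul2r iN orbT.
Qed.

End white_noise.

Section estimator.
Variable R : realType.
Implicit Types (h : R) (N : nat) (V W : nat -> R).

(* [sigma_hat2 h N v] is convertible to [estimator h N (Vvar h N v)]. *)
Definition estimator h N V : R :=
  h ^+ 2 *
  ((119 / 16 - 27 / (4 * N%:R)) * V 0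
   + (9 / (4 * N%:R) - 49 / 16) * V 1
   + (9 / (2 * N%:R) - 35 / 8) * V 2) / denom R N.

Lemma estimatorD h N V W :
  estimator h N (fun j => V j + W j) = estimator h N V + estimator h N W.
Proof. by rewrite /estimator; ring. Qed.

Lemma estimator_Vvar h N u : estimator h N (Vvar h N u) = bias h N u.
Proof.
rewrite /estimator /bias; congr (_ * _ / _).
by rewrite !invfM; set m := N%:R^-1; field.
Qed.

Lemma estimator_Vvar_noise h sigma N : (0 < N)%N -> (4 %| N)%N -> h != 0 ->
  estimator h N (Vvar_noise h N (2 * sigma ^+ 2 / (N%:R * h))) = sigma ^+ 2.
Proof.
move=> N_gt0 /dvdnP[q Nq] h0; have q_gt0 : (0 < q)%N by lia.
have [N0 N1 N2] : [/\ N %/ 2 ^ 0 = q * 4, N %/ 2 ^ 1 = q * 2 & N %/ 2 ^ 2 = q]%N.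
  by rewrite Nq; split; lia.
rewrite /estimator /Vvar_noise N0 N1 N2 !natrB ?muln_gt0 ?q_gt0 // Nq /denom !natrM.
field; rewrite pnatr_eq0 -lt0n q_gt0 h0 andbT /=.
have q_ge1 : 1 <= q%:R :> R by rewrite ler1n.
by apply: lt0r_neq0; nra.
Qed.

End estimator.

Lemma has_mean_estimator (R : realType) (d : measure_display) (T : measurableType d)
    (P : probability T R) (h : R) (N : nat) (V : T -> nat -> R) (m : nat -> R) :
  (forall j, has_mean P (V^~ j) (m j)) ->
  has_mean P (fun w => estimator h N (V w)) (estimator h N m).
Proof.
move=> Vm; rewrite /estimator mulrAC.
apply: (eq_has_mean (fun w => mulrAC _ _ _)); apply: has_meanZ.
by apply: has_meanD; [apply: has_meanD|]; apply: has_meanZ.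
Qed.

Unset Implicit Arguments.

Theorem theorem2p1 (R : realType) (d : measure_display) (T : measurableType d)
  (P : probability T R) (N : nat) (h sigma : R) (u : nat -> R)
  (xi : nat -> {RV P >-> R}) :
  (0 < N)%N -> (4 %| N)%N -> 0 < h -> 0 <= sigma ->
  mutually_independent P N (fun i => (xi i : T -> R)) ->
  (forall i, (1 <= i <= N)%N -> ('E_P[xi i] = 0)%E) ->
  (forall i, (1 <= i <= N)%N ->
     ('E_P[fun w => (xi i w ^+ 2)%R] = (2 * sigma ^+ 2 / (N%:R * h))%:E)%E) ->
  ('E_P[fun w => sigma_hat2 h N (fun i => (u i + xi i w)%R)]
     = (sigma ^+ 2 + bias h N u)%:E)%E.
Proof.
move=> N_gt0 N4 h_gt0 _ indep mean0 sqr.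
have h0 : h != 0 by rewrite gt_eqF.
have centered := has_mean_noise mean0 sqr.
have uncorrelated := has_mean_noiseM indep mean0 sqr.
have [_ ->] := has_mean_estimator h N (has_mean_Vvar centered uncorrelated u ^~ h0).
by rewrite estimatorD estimator_Vvar estimator_Vvar_noise // addrC.
Qed.
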